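(* Let $\mathcal H=\mathcal H_A\otimes\mathcal H_B$ with $\mathcal H_A,\mathcal H_B$ finite-dimensional complex Hilbert spaces, and let $S=\{|\alpha_i\rangle\otimes|\beta_i\rangle\}_{i=1}^{|S|}$ be a partial product basis in $\mathcal H$. Suppose $S$ is uncompletable in $\mathcal H$, but $S$ is completable in some local extension $\mathcal H'$ of $\mathcal H$. Define $$\rho_S=\frac{1}{\dim\mathcal H-|S|}\Big(\mathbf 1-\sum_{i=1}^{|S|}|\alpha_i\rangle\langle\alpha_i|\otimes|\beta_i\rangle\langle\beta_i|\Big).$$ Then $\mathcal L_{\mathcal E}(\rho_S)>\mathcal R(\rho_S)$.
   Context: A partial product basis in $\mathcal H_A\otimes\mathcal H_B$ is a set of $k<\dim\mathcal H$ mutually orthogonal unit product vectors $|\alpha_i\rangle\otimes|\beta_i\rangle$. It is completable in a space $\mathcal K\supseteq\mathcal H$ of the form $\mathcal K=\mathcal K_A\otimes\mathcal K_B$ if it can be extended by further mutually orthogonal unit product vectors (product with respect to $\mathcal K_A\otimes\mathcal K_B$) to an orthonormal basis of $\mathcal K$; it is uncompletable in $\mathcal H$ if this is impossible in $\mathcal H$ itself, i.e. fewer than $\dim\mathcal H-k$ additional mutually orthogonal product vectors orthogonal to $S$ can be added. A local extension of $\mathcal H=\mathcal H_A\otimes\mathcal H_B$ is a space $\mathcal H'=(\mathcal H_A\oplus\mathcal H_A')\otimes(\mathcal H_B\oplus\mathcal H_B')$. $\mathcal R(\rho)$ is the rank of $\rho$. For a density matrix $\rho$ on $\mathcal H_A\otimes\mathcal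 H_B$, $\mathcal L_{\mathcal E}(\rho)$ (the optimal ensemble cardinality) is the least number of distinct pure product states $|\psi_i\rangle|\phi_i\rangle$ in a decomposition $\rho=\sum_i p_i|\psi_i\rangle\langle\psi_i|\otimes|\phi_i\rangle\langle\phi_i|$ with $p_i>0$ (such a decomposition exists exactly when $\rho$ is separable). *)

From HB Require Import structures.
From mathcomp Require Import all_boot all_order all_algebra.
From mathcomp Require Import reals.
From mathcomp Require Import complex mxtens.
Set Implicit Arguments. Unset Strict Implicit. Unset Printing Implicit Defensive.
Import Order.TTheory GRing.Theory Num.Theory.
Local Open Scope ring_scope.

Section Quantum.
Variable R : realType.
Local Notation C := R[i].

Definition adj {p q : nat} (A : 'M[C]_(p, q)) : 'M[C]_(q, p) := (map_mx Num.conj A)^T.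

Definition ip {p : nat} (u v : 'cV[C]_p) : C := (adj u *m v) 0 0.

Definition unit_vec {p : nat} (u : 'cV[C]_p) : Prop := ip u u = 1.

Definition pvec {m n : nat} (a : 'cV[C]_m) (b : 'cV[C]_n) : 'cV[C]_(m * n) := a *t b.

Definition proj {p : nat} (v : 'cV[C]_p) : 'M[C]_p := v *m adj v.

(* A partial product basis of C^m (x) C^n with k elements:
   k < m*n mutually orthogonal unit product vectors a_i (x) b_i
   (factors normalised, which is no loss of generality). *)
Definition partial_product_basis (m n k : nat)
    (a : 'I_k -> 'cV[C]_m) (b : 'I_k -> 'cV[C]_n) : Prop :=
  [/\ (k < m * n)%N,
      (forall i, unit_vec (a i) /\ unit_vec (b i)) &
      (forall i j, i != j -> ip (pvec (a i) (b i)) (pvec (a j) (b j)) = 0)].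

Definition completable (m n k : nat)
    (a : 'I_k -> 'cV[C]_m) (b : 'I_k -> 'cV[C]_n) : Prop :=
  exists (c : 'I_(m * n - k) -> 'cV[C]_m) (d : 'I_(m * n - k) -> 'cV[C]_n),
    [/\ (forall j, unit_vec (c j) /\ unit_vec (d j)),
        (forall j j', j != j' -> ip (pvec (c j) (d j)) (pvec (c j') (d j')) = 0) &
        (forall i j, ip (pvec (a i) (b i)) (pvec (c j) (d j)) = 0)].

Definition uncompletable (m n k : nat)
    (a : 'I_k -> 'cV[C]_m) (b : 'I_k -> 'cV[C]_n) : Prop :=
  ~ completable a b.

(* S is completable in some local extension
   (C^m (+) C^m') (x) (C^n (+) C^n'), C^m embedded as the first m coordinates. *)
Definition completable_in_local_extension (m n k : nat)
    (a : 'I_k -> 'cV[C]_m) (b : 'I_k -> 'cV[C]_n) : Prop :=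
  exists m' n' : nat,
    completable (fun i => col_mx (a i) (0 : 'cV[C]_m'))
                (fun i => col_mx (b i) (0 : 'cV[C]_n')).

Definition rhoS (m n k : nat)
    (a : 'I_k -> 'cV[C]_m) (b : 'I_k -> 'cV[C]_n) : 'M[C]_(m * n) :=
  ((m * n - k)%:R)^-1 *: (1%:M - \sum_(i < k) (proj (a i) *t proj (b i))).

Definition product_decomposition (m n : nat) (rho : 'M[C]_(m * n)) (N : nat) : Prop :=
  exists (p : 'I_N -> C) (x : 'I_N -> 'cV[C]_m) (y : 'I_N -> 'cV[C]_n),
    [/\ (forall i, 0 < p i),
        (forall i, unit_vec (x i) /\ unit_vec (y i)),
        (forall i j, i != j -> proj (x i) *t proj (y i) != proj (x j) *t proj (y j)) &
        rho = \sum_(i < N) p i *: (proj (x i) *t proj (y i))].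

(* rho is separable, i.e. L_E(rho) is defined *)
Definition separable (m n : nat) (rho : 'M[C]_(m * n)) : Prop :=
  exists N, product_decomposition rho N.

(* L_E(rho) > r : rho is separable and every product decomposition of rho
   uses more than r distinct pure product states. *)
Definition LE_gt (m n : nat) (rho : 'M[C]_(m * n)) (r : nat) : Prop :=
  separable rho /\ forall N, product_decomposition rho N -> (r < N)%N.

End Quantum.

From HB Require Import structures.
From mathcomp Require Import all_boot all_order all_algebra.
From mathcomp Require Import reals.
From mathcomp Require Import complex mxtens.
From mathcomp Require Import ring zify.
Set Implicit Arguments. Unset Strict Implicit. Unset Printing Implicit Defensive.
Import Order.TTheory GRing.Theory Num.Theory.
Local Open Scope ring_scope.

(* Write P := 1 - sum_l |s_l><s_l| for the projector onto the orthogonal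
   complement of S, so that rho_S = P / r with r = dim H - |S| = tr P >= rank P.
   If rho_S = sum_i p_i |x_i y_i><x_i y_i| with N <= rank rho_S terms, then
   P = sum_i q_i |u_i><u_i| with q_i = r p_i and N <= r, and comparing
   tr P = sum_i q_i = r with tr P^2 = sum_(i,j) q_i q_j |<u_i|u_j>|^2 = r gives
   sum_(i<>j) q_i q_j |<u_i|u_j>|^2 + sum_i (q_i - 1)^2 + (r - N) = 0.
   Hence N = r and the u_i = x_i y_i are orthonormal; as P s_l = 0 they are
   orthogonal to S, so they would complete S in H.
   Conversely, a completion of S in a local extension H', compressed back to H
   by the coordinate projection of each factor, writes P as a sum of
   (unnormalised) product projectors, so rho_S is separable. *)

Lemma weighted_gram_rigid (F : numDomainType) N r (q : 'I_N -> F)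
    (g : 'I_N -> 'I_N -> F) :
  (forall i, 0 < q i) -> (forall i j, 0 <= g i j) -> (forall i, g i i = 1) ->
  \sum_i q i = r%:R -> \sum_i \sum_j q i * q j * g i j = r%:R -> (N <= r)%N ->
  N = r /\ (forall i j, i != j -> g i j = 0).
Proof.
move=> q_gt0 g_ge0 g_diag sum_q sum_qqg leNr.
have t_ge0 i j : 0 <= q i * q j * g i j by rewrite !mulr_ge0 // ltW.
pose O := \sum_i \sum_(j | j != i) q i * q j * g i j.
have O_ge0 : 0 <= O by rewrite sumr_ge0 // => i _; rewrite sumr_ge0.
have sq_ge0 : 0 <= \sum_i (q i - 1) ^+ 2.
  by rewrite sumr_ge0 // => i _; rewrite -realEsqr rpredB // gtr0_real.
have rN_ge0 : 0 <= r%:R - N%:R :> F by rewrite subr_ge0 ler_nat.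
have diag_split : \sum_i q i ^+ 2 + O = r%:R.
  rewrite -sum_qqg -big_split; apply: eq_bigr => i _.
  by rewrite [RHS](bigD1 i) //= g_diag mulr1 expr2.
have sq_expand : \sum_i (q i - 1) ^+ 2 = \sum_i q i ^+ 2 - r%:R *+ 2 + N%:R.
  rewrite (eq_bigr _ (fun i _ => sqrrB1 (q i))) big_split /= sumrB sumrMnl.
  by rewrite sum_q sumr_const card_ord.
have : O + \sum_i (q i - 1) ^+ 2 + (r%:R - N%:R) = 0.
  by rewrite sq_expand -diag_split; ring.
move/eqP; rewrite (paddr_eq0 (addr_ge0 O_ge0 sq_ge0) rN_ge0) paddr_eq0 //.
case/andP=> /andP[/eqP O0 _]; rewrite subr_eq0 eqr_nat => /eqP rN.
split=> [|i j ij]; first by [].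
have Oi := psumr_eq0P (fun i _ => sumr_ge0 _ (fun j _ => t_ge0 i j)) O0
  (i := i) isT.
have := psumr_eq0P (fun j _ => t_ge0 i j) Oi (i := j).
rewrite eq_sym ij => /(_ isT) /eqP.
by rewrite !mulf_eq0 (gt_eqF (q_gt0 i)) (gt_eqF (q_gt0 j)) => /eqP.
Qed.

Section Hilbert.
Variable R : realType.
Local Notation C := R[i].

Lemma adjE p q (A : 'M[C]_(p, q)) i j : adj A i j = (A j i)^*.
Proof. by rewrite !mxE. Qed.

Lemma adjM p q r (A : 'M[C]_(p, q)) (B : 'M[C]_(q, r)) :
  adj (A *m B) = adj B *m adj A.
Proof. by rewrite /adj map_mxM trmx_mul. Qed.

Lemma adjZ p q c (A : 'M[C]_(p, q)) : adj (c *: A) = c^* *: adj A.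
Proof. by apply/matrixP=> i j; rewrite !mxE rmorphM. Qed.

Lemma adj0 p q : adj (0 : 'M[C]_(p, q)) = 0.
Proof. by apply/matrixP=> i j; rewrite !mxE rmorph0. Qed.

Lemma adj1 p : adj (1%:M : 'M[C]_p) = 1%:M.
Proof. by apply/matrixP=> i j; rewrite !mxE rmorphMn rmorph1 eq_sym. Qed.

Lemma adj_tens p q r s (A : 'M[C]_(p, q)) (B : 'M[C]_(r, s)) :
  adj (A *t B) = adj A *t adj B.
Proof. by rewrite /adj map_mxT trmx_tens. Qed.

Lemma adj_row_mx p q1 q2 (A : 'M[C]_(p, q1)) (B : 'M[C]_(p, q2)) :
  adj (row_mx A B) = col_mx (adj A) (adj B).
Proof. by rewrite /adj map_row_mx tr_row_mx. Qed.

Lemma adj_col_mx p1 p2 q (A : 'M[C]_(p1, q)) (B : 'M[C]_(p2, q)) :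
  adj (col_mx A B) = row_mx (adj A) (adj B).
Proof. by rewrite /adj map_col_mx tr_col_mx. Qed.

Lemma tensmxZl p q r s c (A : 'M[C]_(p, q)) (B : 'M[C]_(r, s)) :
  (c *: A) *t B = c *: (A *t B).
Proof. by apply/matrixP=> i j; rewrite !mxE mulrA. Qed.

Lemma tensmxZr p q r s c (A : 'M[C]_(p, q)) (B : 'M[C]_(r, s)) :
  A *t (c *: B) = c *: (A *t B).
Proof. by apply/matrixP=> i j; rewrite !mxE mulrCA. Qed.

Lemma tensmx11 p q : (1%:M : 'M[C]_p) *t (1%:M : 'M[C]_q) = 1%:M.
Proof.
apply/matrixP=> i j.
case: (mxtens_indexP i) => i0 i1; case: (mxtens_indexP j) => j0 j1.
rewrite tensmxE [RHS]mxE (can_eq (@mxtens_indexK _ _)) xpair_eqE !mxE.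
by case: (i0 == j0); case: (i1 == j1); rewrite /= ?mulr1 ?mulr0.
Qed.

Lemma tensmx_mx11 (A B : 'M[C]_1) : (A *t B) 0 0 = A 0 0 * B 0 0.
Proof.
have idx00 (x : 'I_(1 * 1)) : x = mxtens_index (0, 0).
  by apply: val_inj; case: x => [[|x] Hx].
by rewrite [X in (_ *t _) X]idx00 [X in (_ *t _) _ X]idx00 tensmxE.
Qed.

Lemma ipE p (u v : 'cV[C]_p) : ip u v = \sum_t (u t 0)^* * v t 0.
Proof. by rewrite /ip mxE; apply: eq_bigr => t _; rewrite adjE. Qed.

Lemma ipC p (u v : 'cV[C]_p) : ip v u = (ip u v)^*.
Proof.
rewrite !ipE rmorph_sum; apply: eq_bigr => t _.
by rewrite rmorphM /= conjCK mulrC.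
Qed.

Lemma ipZ p (x y : C) (u v : 'cV[C]_p) : ip (x *: u) (y *: v) = x^* * y * ip u v.
Proof. by rewrite /ip adjZ -scalemxAl -scalemxAr !mxE mulrA. Qed.

Lemma ip_ge0 p (u : 'cV[C]_p) : 0 <= ip u u.
Proof. by rewrite ipE sumr_ge0 // => t _; rewrite mulrC mul_conjC_ge0. Qed.

Lemma ip_eq0 p (u : 'cV[C]_p) : (ip u u == 0) = (u == 0).
Proof.
apply/eqP/eqP=> [|->]; last by rewrite ipE big1 // => t _; rewrite mxE mulr0.
have t_ge0 t : true -> 0 <= (u t 0)^* * u t 0 by rewrite mulrC mul_conjC_ge0.
rewrite ipE => /(psumr_eq0P t_ge0) u0; apply/matrixP=> t j; rewrite [j]ord1 mxE.
by apply/eqP; rewrite -mul_conjC_eq0 mulrC u0.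
Qed.

Lemma ip_tens p q (x x' : 'cV[C]_p) (y y' : 'cV[C]_q) :
  ip (x *t y) (x' *t y') = ip x x' * ip y y'.
Proof. by rewrite /ip (adj_tens x y) -tensmx_mx11 -tensmx_mul. Qed.

Lemma ip_col_mx0 p q (x y : 'cV[C]_p) :
  ip (col_mx x (0 : 'cV[C]_q)) (col_mx y 0) = ip x y.
Proof. by rewrite /ip adj_col_mx mul_row_col adj0 mul0mx addr0. Qed.

Lemma tensmx_mul_pvec p p' q q' (A : 'M[C]_(p, p')) (B : 'M[C]_(q, q')) x y :
  (A *t B) *m pvec x y = pvec (A *m x) (B *m y).
Proof. exact: (@tensmx_mul _ p p' q q' 1 1). Qed.

Lemma proj_tens p q (x : 'cV[C]_p) (y : 'cV[C]_q) :
  proj x *t proj y = proj (x *t y).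
Proof. by rewrite /proj (adj_tens x y) -tensmx_mul. Qed.

Lemma projZ p c (u : 'cV[C]_p) : proj (c *: u) = (c * c^*) *: proj u.
Proof. by rewrite /proj adjZ -scalemxAl -scalemxAr scalerA. Qed.

Lemma proj0 p : proj (0 : 'cV[C]_p) = 0.
Proof. by rewrite /proj mul0mx. Qed.

Lemma mulmx_proj_adj p q (E : 'M[C]_(p, q)) (u : 'cV[C]_q) :
  E *m proj u *m adj E = proj (E *m u).
Proof. by rewrite /proj adjM !mulmxA. Qed.

Lemma mxtrace_proj p (u : 'cV[C]_p) : \tr (proj u) = ip u u.
Proof. by rewrite /proj mxtrace_mulC trace_mx11. Qed.

Lemma ip_projM p (u v : 'cV[C]_p) : ip v (proj u *m v) = `|ip u v| ^+ 2.
Proof.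
rewrite normCK -ipC mulrC /ip /proj !mulmxA -[_ *m v]mulmxA.
by rewrite [LHS]mxE big_ord1.
Qed.

Lemma mxtrace_projM p (u v : 'cV[C]_p) :
  \tr (proj u *m proj v) = `|ip u v| ^+ 2.
Proof.
by rewrite -ip_projM /proj mulmxA mxtrace_mulC trace_mx11 -!mulmxA.
Qed.

Lemma ip_sum_projZ p N (q : 'I_N -> C) (u : 'I_N -> 'cV[C]_p) (v : 'cV[C]_p) :
  ip v ((\sum_i q i *: proj (u i)) *m v) = \sum_i q i * `|ip (u i) v| ^+ 2.
Proof.
rewrite /ip mulmx_suml mulmx_sumr summxE; apply: eq_bigr => i _.
by rewrite -scalemxAl -scalemxAr mxE -ip_projM.
Qed.

Section WeightedProjections.
Variables (p N : nat) (q : 'I_N -> C) (u : 'I_N -> 'cV[C]_p).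
Hypothesis q_gt0 : forall i, 0 < q i.

Lemma sum_projZ_ker_orth v :
  (\sum_i q i *: proj (u i)) *m v = 0 -> forall i, ip (u i) v = 0.
Proof.
move=> Pv0 i; have := ip_sum_projZ q u v; rewrite Pv0 {1}/ip mulmx0 mxE => sum0.
have t_ge0 j : true -> 0 <= q j * `|ip (u j) v| ^+ 2.
  by move=> _; rewrite mulr_ge0 ?exprn_ge0 // ltW.
have /eqP := psumr_eq0P t_ge0 (esym sum0) (i := i) isT.
by rewrite mulf_eq0 gt_eqF //= expf_eq0 normr_eq0 => /eqP.
Qed.

Lemma projector_sum_projZ_orthonormal (P : 'M[C]_p) r :
  P = \sum_i q i *: proj (u i) -> P *m P = P -> \tr P = r%:R ->
  (forall i, ip (u i) (u i) = 1) -> (N <= r)%N ->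
  N = r /\ (forall i j, i != j -> ip (u i) (u j) = 0).
Proof.
move=> P_dec P_idem trP u_unit leNr.
have sum_q : \sum_i q i = r%:R.
  rewrite -trP P_dec raddf_sum; apply: eq_bigr => i _ /=.
  by rewrite mxtraceZ mxtrace_proj u_unit mulr1.
have sum_qqg : \sum_i \sum_j q i * q j * `|ip (u i) (u j)| ^+ 2 = r%:R.
  rewrite -trP -P_idem P_dec mulmx_suml raddf_sum; apply: eq_bigr => i _ /=.
  rewrite mulmx_sumr raddf_sum; apply: eq_bigr => j _ /=.
  by rewrite -scalemxAl -scalemxAr !mxtraceZ mxtrace_projM mulrA.
have u_diag i : `|ip (u i) (u i)| ^+ 2 = 1 by rewrite u_unit normr1 expr1n.
have [NR orth] := weighted_gram_rigid q_gt0 (fun i j => exprn_ge0 2 (normr_ge0 _))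
  u_diag sum_q sum_qqg leNr.
split=> // i j /orth /eqP.
by rewrite expf_eq0 normr_eq0 => /eqP.
Qed.

End WeightedProjections.

Definition orthonormal p N (u : 'I_N -> 'cV[C]_p) :=
  forall i j, ip (u i) (u j) = (i == j)%:R.

Definition cols_mx p N (u : 'I_N -> 'cV[C]_p) : 'M[C]_(p, N) :=
  \matrix_(t, i) u i t 0.

Definition compl_proj p N (u : 'I_N -> 'cV[C]_p) : 'M[C]_p :=
  1%:M - \sum_i proj (u i).

Lemma cols_mx_mul_adj p N (u : 'I_N -> 'cV[C]_p) :
  cols_mx u *m adj (cols_mx u) = \sum_i proj (u i).
Proof.
apply/matrixP=> x y; rewrite summxE !mxE; apply: eq_bigr => i _.
by rewrite !mxE big_ord1 !mxE.
Qed.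

Lemma adj_cols_mx_mul p N1 N2 (u : 'I_N1 -> 'cV[C]_p) (w : 'I_N2 -> 'cV[C]_p) :
  adj (cols_mx u) *m cols_mx w = \matrix_(i, j) ip (u i) (w j).
Proof.
apply/matrixP=> i j; rewrite !mxE ipE; apply: eq_bigr => t _.
by rewrite !mxE.
Qed.

Lemma col_cols_mx p N (u : 'I_N -> 'cV[C]_p) j : col j (cols_mx u) = u j.
Proof. by apply/matrixP=> t k; rewrite [k]ord1 !mxE. Qed.

Lemma orthonormal_pvec m n N (x : 'I_N -> 'cV[C]_m) (y : 'I_N -> 'cV[C]_n) :
  (forall i, unit_vec (x i) /\ unit_vec (y i)) ->
  (forall i j, i != j -> ip (pvec (x i) (y i)) (pvec (x j) (y j)) = 0) ->
  orthonormal (fun i => pvec (x i) (y i)).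
Proof.
move=> xy_unit xy_orth i j; case: eqVneq => [<-|/xy_orth //].
by rewrite ip_tens; case: (xy_unit i) => -> ->; rewrite mulr1.
Qed.

Section Orthonormal.
Variables (p N : nat) (u : 'I_N -> 'cV[C]_p).
Hypothesis u_on : orthonormal u.
Local Notation U := (cols_mx u).

Lemma orthonormal_cols_mx : adj U *m U = 1%:M.
Proof. by rewrite adj_cols_mx_mul; apply/matrixP=> i j; rewrite !mxE u_on. Qed.

Lemma sum_proj_cols_mx : (\sum_i proj (u i)) *m U = U.
Proof. by rewrite -cols_mx_mul_adj -mulmxA orthonormal_cols_mx mulmx1. Qed.

Lemma compl_proj_orth j : compl_proj u *m u j = 0.
Proof.
rewrite -col_cols_mx colE mulmxA /compl_proj mulmxBl mul1mx sum_proj_cols_mx.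
by rewrite subrr mul0mx.
Qed.

Lemma sum_proj_idem :
  (\sum_i proj (u i)) *m (\sum_i proj (u i)) = \sum_i proj (u i).
Proof.
by rewrite -{2}cols_mx_mul_adj mulmxA sum_proj_cols_mx cols_mx_mul_adj.
Qed.

Lemma compl_proj_idem : compl_proj u *m compl_proj u = compl_proj u.
Proof.
by rewrite /compl_proj mulmxBl mul1mx mulmxBr mulmx1 sum_proj_idem subrr subr0.
Qed.

Lemma mxtrace_compl_proj : (N <= p)%N -> \tr (compl_proj u) = (p - N)%:R.
Proof.
move=> leNp; rewrite /compl_proj mxtraceD raddfN /= mxtrace1 -cols_mx_mul_adj.
by rewrite mxtrace_mulC orthonormal_cols_mx mxtrace1 natrB.
Qed.

Lemma rank_compl_proj : (\rank (compl_proj u) <= p - N)%N.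
Proof.
set Q := \sum_i proj (u i).
have QP0 : Q *m compl_proj u = 0.
  by rewrite /compl_proj mulmxBr mulmx1 sum_proj_idem subrr.
have leNQ : (N <= \rank Q)%N.
  rewrite -{1}(mxrank1 C N) -orthonormal_cols_mx -sum_proj_cols_mx.
  exact: leq_trans (mxrankM_maxr _ _) (mxrankM_maxl _ _).
have := mulmx0_rank_max QP0; lia.
Qed.

End Orthonormal.

Lemma sum_proj_completion p N1 N2 (u : 'I_N1 -> 'cV[C]_p)
    (w : 'I_N2 -> 'cV[C]_p) :
  (N1 + N2 = p)%N -> orthonormal u -> orthonormal w ->
  (forall i j, ip (u i) (w j) = 0) ->
  \sum_i proj (u i) + \sum_j proj (w j) = 1%:M.
Proof.
move=> e u_on w_on uw0; subst p.
rewrite -!cols_mx_mul_adj -mul_row_col -adj_row_mx.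
apply: mulmx1C; rewrite adj_row_mx mul_col_row !orthonormal_cols_mx //.
rewrite !adj_cols_mx_mul [X in block_mx _ X](_ : _ = 0)
  ?[X in block_mx _ _ X](_ : _ = 0).
- by rewrite -scalar_mx_block.
- by apply/matrixP=> i j; rewrite !mxE ipC uw0 conjC0.
- by apply/matrixP=> i j; rewrite !mxE uw0.
Qed.

Lemma mul_row_mx10_col_mx p q (x : 'cV[C]_p) :
  row_mx 1%:M (0 : 'M[C]_(p, q)) *m col_mx x 0 = x.
Proof. by rewrite mul_row_col mul1mx mul0mx addr0. Qed.

Lemma mul_row_mx10_adj p q :
  row_mx 1%:M (0 : 'M[C]_(p, q)) *m adj (row_mx 1%:M 0) = 1%:M.
Proof. by rewrite adj_row_mx adj1 adj0 mul_row_col mulmx1 mul0mx addr0. Qed.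

Lemma proj_normalize p (c : 'cV[C]_p) : c != 0 ->
  exists2 c', unit_vec c' & proj c = ip c c *: proj c'.
Proof.
rewrite -ip_eq0 => c_nz; have c_gt0 : 0 < ip c c by rewrite lt_def c_nz ip_ge0.
set g := ip c c in c_nz c_gt0 *; set h := sqrtC g.
have h_real : h^* = h by rewrite conj_Creal // ger0_real // sqrtC_ge0 ltW.
have hh : h * h = g by rewrite -expr2 sqrtCK.
have h_nz : h != 0 by rewrite sqrtC_eq0.
exists (h^-1 *: c).
  by rewrite /unit_vec ipZ fmorphV /= h_real -/g -invfM hh mulVf.
by rewrite projZ fmorphV /= h_real -invfM hh scalerA mulfV ?scale1r.
Qed.

Section Separable.
Variables m n : nat.

Lemma separable0 : separable (0 : 'M[C]_(m * n)).
Proof.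
exists 0%N, (fun _ => 1), (fun _ => 0), (fun _ => 0).
by split=> [[]|[]|[]|]; rewrite ?big_ord0.
Qed.

Lemma separable_add_pure (A : 'M[C]_(m * n)) w x0 y0 :
  separable A -> 0 < w -> unit_vec x0 -> unit_vec y0 ->
  separable (A + w *: (proj x0 *t proj y0)).
Proof.
case=> N [p [x [y [p_gt0 xy_unit xy_uniq A_dec]]]] w_gt0 x0_unit y0_unit.
set M := proj x0 *t proj y0.
(* The states of a decomposition must be pairwise distinct, so a state that is
   already present only has its weight increased. *)
case: (pickP (fun i => proj (x i) *t proj (y i) == M)) => [i0 /eqP Mi0|M_new].
  exists N, (fun i => if i == i0 then p i + w else p i), x, y; split=> //.
    by move=> i; case: eqP => _; rewrite ?addr_gt0.
  rewrite A_dec [RHS](eq_bigr (fun i => p i *: (proj (x i) *t proj (y i)) +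
                             (if i == i0 then w *: M else 0))); last first.
    move=> i _ /=; case: (eqVneq i i0) => [->|_]; last by rewrite addr0.
    by rewrite scalerDl Mi0.
  by rewrite big_split /= -big_mkcond big_pred1_eq.
pose ext T (f : 'I_N -> T) t0 i := if unlift ord_max i is Some j then f j else t0.
exists N.+1, (ext _ p w), (ext _ x x0), (ext _ y y0); rewrite /ext; split.
- by move=> i; case: (unlift _ _).
- by move=> i; case: (unlift _ _).
- move=> i j; case: (unliftP ord_max i) => [i'|] ->;
    case: (unliftP ord_max j) => [j'|] -> //.
  + by rewrite (inj_eq lift_inj); exact: xy_uniq.
  + by move=> _; rewrite M_new.
  + by move=> _; rewrite eq_sym M_new.
  + by rewrite eqxx.
- rewrite big_ord_recr /= A_dec unlift_none; congr (_ + _).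
  apply: eq_bigr => i _; have -> : widen_ord (leqnSn N) i = lift ord_max i.
    by apply: val_inj; rewrite /= /bump leqNgt ltn_ord.
  by rewrite liftK.
Qed.

Lemma separable_sum_proj_tens J (w : 'I_J -> C) (c : 'I_J -> 'cV[C]_m)
    (d : 'I_J -> 'cV[C]_n) :
  (forall j, 0 <= w j) -> separable (\sum_j w j *: (proj (c j) *t proj (d j))).
Proof.
elim: J w c d => [|J IH] w c d w_ge0.
  by rewrite big_ord0; exact: separable0.
rewrite big_ord_recr /=.
pose wd j := widen_ord (leqnSn J) j.
have := IH (w \o wd) (c \o wd) (d \o wd) (fun j => w_ge0 _).
have [->|w_nz] := eqVneq (w ord_max) 0; first by rewrite scale0r addr0.
have [->|c_nz] := eqVneq (c ord_max) 0.
  by rewrite proj0 tens0mx scaler0 addr0.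
have [->|d_nz] := eqVneq (d ord_max) 0.
  by rewrite proj0 tensmx0 scaler0 addr0.
have [c' c'_unit ->] := proj_normalize c_nz.
have [d' d'_unit ->] := proj_normalize d_nz.
rewrite tensmxZl tensmxZr !scalerA => sep; apply: separable_add_pure => //.
by rewrite !mulr_gt0 // lt0r ?ip_eq0 ?ip_ge0 ?w_nz ?w_ge0 ?c_nz ?d_nz.
Qed.

End Separable.

Section PartialProductBasis.
Variables (m n k : nat) (a : 'I_k -> 'cV[C]_m) (b : 'I_k -> 'cV[C]_n).
Hypothesis ppb : partial_product_basis a b.
Local Notation s := (fun l => pvec (a l) (b l)).

Lemma orthonormal_ppb : orthonormal s.
Proof. by case: ppb => _ ab_unit ab_orth; apply: orthonormal_pvec. Qed.

Lemma rhoSE : rhoS a b = ((m * n - k)%:R)^-1 *: compl_proj s.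
Proof. by congr (_ *: (_ - _)); apply: eq_bigr => l _; rewrite proj_tens. Qed.

Lemma completable_of_small_decomposition N :
  product_decomposition (rhoS a b) N -> (N <= \rank (rhoS a b))%N ->
  completable a b.
Proof.
case=> p [x [y [p_gt0 xy_unit _ rho_dec]]] le_N_rank.
have [lt_k_mn _ _] := ppb; set r := (m * n - k)%N.
have r_gt0 : 0 < r%:R :> C by rewrite ltr0n subn_gt0.
set P := compl_proj s.
have P_dec : P = \sum_i (r%:R * p i) *: proj (x i *t y i).
  rewrite -[P](scalerKV (lt0r_neq0 r_gt0)) -rhoSE rho_dec scaler_sumr.
  by apply: eq_bigr => i _; rewrite scalerA proj_tens.
have le_N_r : (N <= r)%N.
  rewrite (leq_trans le_N_rank) // rhoSE mxrank_scale_nz ?invr_eq0 ?lt0r_neq0 //.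
  exact: rank_compl_proj orthonormal_ppb.
have q_gt0 i : 0 < r%:R * p i by rewrite mulr_gt0.
have xy_unit' i : ip (x i *t y i) (x i *t y i) = 1.
  by rewrite ip_tens; case: (xy_unit i) => -> ->; rewrite mulr1.
have [eN xy_orth] := projector_sum_projZ_orthonormal q_gt0 P_dec
  (compl_proj_idem orthonormal_ppb)
  (mxtrace_compl_proj orthonormal_ppb (ltnW lt_k_mn)) xy_unit' le_N_r.
have s_orth l i : ip (s l) (x i *t y i) = 0.
  have := compl_proj_orth orthonormal_ppb l; rewrite -/P P_dec.
  by move=> /(sum_projZ_ker_orth q_gt0) ker; rewrite ipC ker conjC0.
subst N; by exists x, y.
Qed.

Lemma separable_rhoS_of_local_completion :
  completable_in_local_extension a b -> separable (rhoS a b).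
Proof.
case=> m' [n' [c [d [cd_unit cd_orth sc_orth]]]].
have [lt_k_mn _ _] := ppb.
have le_k_D : (k <= (m + m') * (n + n'))%N.
  by rewrite ltnW // (leq_trans lt_k_mn) // leq_mul // leq_addr.
have s'_on : orthonormal (fun l => pvec (col_mx (a l) (0 : 'cV[C]_m'))
                                          (col_mx (b l) (0 : 'cV[C]_n'))).
  by move=> i j /=; rewrite ip_tens !ip_col_mx0 -ip_tens; exact: orthonormal_ppb.
have one_ext := sum_proj_completion (subnKC le_k_D) s'_on
  (orthonormal_pvec cd_unit cd_orth) sc_orth.
pose EA := row_mx 1%:M (0 : 'M[C]_(m, m')).
pose EB := row_mx 1%:M (0 : 'M[C]_(n, n')).
have one : \sum_l proj (s l) + \sum_j proj (EA *m c j) *t proj (EB *m d j) = 1%:M.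
  have EE : (EA *t EB) *m adj (EA *t EB) = 1%:M.
    by rewrite adj_tens tensmx_mul !mul_row_mx10_adj tensmx11.
  rewrite -EE -[X in _ = X *m _]mulmx1 -one_ext mulmxDr mulmxDl.
  rewrite !mulmx_sumr !mulmx_suml; congr (_ + _); apply: eq_bigr => l _.
    by rewrite mulmx_proj_adj tensmx_mul_pvec !mul_row_mx10_col_mx.
  by rewrite mulmx_proj_adj tensmx_mul_pvec proj_tens.
rewrite rhoSE /compl_proj -one addrAC subrr add0r scaler_sumr.
by apply: separable_sum_proj_tens => j; rewrite invr_ge0 ler0n.
Qed.

End PartialProductBasis.
End Hilbert.

Theorem theorem2 (R : realType) (m n k : nat)
    (a : 'I_k -> 'cV[R[i]]_m) (b : 'I_k -> 'cV[R[i]]_n) :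
  partial_product_basis a b ->
  uncompletable a b ->
  completable_in_local_extension a b ->
  LE_gt (rhoS a b) (\rank (rhoS a b)).
Proof.
move=> ppb uncomp ext; split; first exact: separable_rhoS_of_local_completion.
move=> N decN; rewrite ltnNge; apply/negP => le_N_rank; apply: uncomp.
exact: completable_of_small_decomposition decN le_N_rank.
Qed.
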